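(* Let $R$ be an artinian ring and $\mathcal{S}$ a full subcategory of $\operatorname{Mod}R$ which is closed under direct sums and submodules and contains $R_R$, such that $\mathcal{S}$ has only finitely many indecomposable finitely generated objects up to isomorphism, say $M_1,\dots,M_n$. Let $M=M_1\oplus\cdots\oplus M_n$, $X\in\mathcal{S}$, $H=\operatorname{Hom}_R(M,X)$, and let $p:M^{(H)}\to X$ be the map $(m_h)_{h\in H}\mapsto\sum_{h\in H}h(m_h)$ (which is an epimorphism), with kernel $K$. Then the short exact sequence $0\to K\to M^{(H)}\xrightarrow{p}X\to0$ is pure exact.
   Context: A short exact sequence $0\to A\xrightarrow{f}B\xrightarrow{g}C\to0$ of right $R$-modules is pure exact if $\operatorname{Hom}_R(N,g)$ is surjective for every finitely presented right $R$-module $N$ (equivalently, $f\otimes_R 1_Y$ is injective for every left $R$-module $Y$). $M^{(H)}$ denotes the direct sum of copies of $M$ indexed by $H$. *)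

From HB Require Import structures.
From mathcomp Require Import all_boot all_order all_algebra.
Set Implicit Arguments. Unset Strict Implicit. Unset Printing Implicit Defensive.
Import GRing.Theory.
Local Open Scope ring_scope.

(* Right R-modules are modelled as left modules over the converse ring R^c:
   for r : R^c and x in M, r *: x stands for x * r. *)

Section Defs.
Variable R : ringType.

Definition right_ideal (P : R -> Prop) : Prop :=
  [/\ P 0, (forall x y, P x -> P y -> P (x - y)) & (forall x r, P x -> P (x * r))].

Definition right_artinian : Prop :=
  forall I : nat -> R -> Prop, (forall k, right_ideal (I k)) ->
    (forall k x, I k.+1 x -> I k x) ->
    exists k0, forall k, (k0 <= k)%N -> forall x, I k x <-> I k0 x.

Definition submod (M : lmodType R^c) (P : M -> Prop) : Prop :=
  [/\ P 0, (forall x y, P x -> P y -> P (x - y)) & (forall (r : R^c) x, P x -> P (r *: x))].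

Definition fin_gen (M : lmodType R^c) : Prop :=
  exists s : seq M, forall x : M,
    exists c : 'I_(size s) -> R^c, x = \sum_(i < size s) c i *: s`_i.

Definition fin_pres (N : lmodType R^c) : Prop :=
  exists (k : nat) (phi : {linear 'rV[R^c]_k -> N}),
    (forall y, exists v, phi v = y) /\
    exists s : seq 'rV[R^c]_k, (forall i : 'I_(size s), phi s`_i = 0) /\
      forall v, phi v = 0 ->
        exists c : 'I_(size s) -> R^c, v = \sum_(i < size s) c i *: s`_i.

Definition indecomposable (M : lmodType R^c) : Prop :=
  (exists x : M, x <> 0) /\
  forall A B : M -> Prop, submod A -> submod B ->
    (forall x, A x -> B x -> x = 0) ->
    (forall x, exists a b, [/\ A a, B b & x = a + b]) ->
    (forall x, A x -> x = 0) \/ (forall x, B x -> x = 0).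

Definition mod_iso (A B : lmodType R^c) : Prop :=
  exists f : {linear A -> B}, bijective f.

Definition is_dsum (I : Type) (F : I -> lmodType R^c) (D : lmodType R^c)
  (iota : forall i, {linear F i -> D}) : Prop :=
  forall (Y : lmodType R^c) (g : forall i, {linear F i -> Y}),
    exists h : {linear D -> Y},
      (forall i x, h (iota i x) = g i x) /\
      (forall h' : {linear D -> Y}, (forall i x, h' (iota i x) = g i x) ->
         forall x, h' x = h x).

Definition closed_dsum (S : lmodType R^c -> Prop) : Prop :=
  forall (I : Type) (F : I -> lmodType R^c) (D : lmodType R^c)
    (iota : forall i, {linear F i -> D}),
    (forall i, S (F i)) -> is_dsum iota -> S D.

(* closed under submodules (i.e. under monomorphisms; in particular replete) *)
Definition closed_sub (S : lmodType R^c -> Prop) : Prop :=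
  forall (N Y : lmodType R^c) (f : {linear N -> Y}), injective f -> S Y -> S N.

(* 0 -> ker p -> B -> X -> 0 is pure exact: p onto, and Hom(N,p) onto for
   every finitely presented N *)
Definition pure_epi (B X : lmodType R^c) (p : {linear B -> X}) : Prop :=
  (forall x, exists b, p b = x) /\
  forall N : lmodType R^c, fin_pres N ->
    forall f : {linear N -> X}, exists g : {linear N -> B}, forall y, p (g y) = f y.

End Defs.

(* A finitely generated module over an artinian ring satisfies the descending
   chain condition on submodules, so if some finitely generated submodule of X
   had no linear section along p there would be a minimal one, Q.  It is
   nonzero and cannot split as A + C with A, C nonzero: both summands are
   smaller finitely generated submodules, so they lift, and the two lifts add
   up to a lift of Q.  Hence Q is indecomposable; as a submodule of X it lies in
   S, so it is isomorphic to some M_i, and it lifts through the copy of M in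
   M^(H) indexed by any map M -> X extending M_i ~ Q.  Purity follows because a
   map from a finitely presented module has finitely generated image.  Of the
   assumptions on S only closure under submodules and the exhaustiveness of
   M_1, ..., M_n are needed. *)

From HB Require Import structures.
From mathcomp Require Import all_boot all_order all_algebra.
From mathcomp Require Import boolp.
From Stdlib Require Import Classical.
Set Implicit Arguments. Unset Strict Implicit. Unset Printing Implicit Defensive.
Import GRing.Theory.
Local Open Scope ring_scope.

Lemma stationary_le (T : Type) (C : nat -> T -> Prop) k1 :
  (forall k, (k1 <= k)%N -> forall x, C k x <-> C k1 x) ->
  forall k0 k, (k1 <= k0)%N -> (k1 <= k)%N -> forall x, C k0 x -> C k x.
Proof. by move=> stC k0 k le0 le x /(stC _ le0) /(stC _ le). Qed.

Section Submodules.
Variables (R : nzRingType) (X : lmodType R^c).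
Implicit Types (Q : X -> Prop) (x y : X) (r : R^c).

Lemma submod0 Q : submod Q -> Q 0.
Proof. by case. Qed.

Lemma submodB Q x y : submod Q -> Q x -> Q y -> Q (x - y).
Proof. by case=> _ + _; apply. Qed.

Lemma submodN Q x : submod Q -> Q x -> Q (- x).
Proof. by move=> hQ Qx; rewrite -sub0r; apply: submodB (submod0 hQ) Qx. Qed.

Lemma submodD Q x y : submod Q -> Q x -> Q y -> Q (x + y).
Proof. by move=> hQ Qx Qy; rewrite -[y]opprK; apply: submodB (submodN hQ Qy). Qed.

Lemma submodZ Q r x : submod Q -> Q x -> Q (r *: x).
Proof. by case=> _ _; apply. Qed.

Lemma submodI (A B : X -> Prop) : submod A -> submod B -> submod (fun x => A x /\ B x).
Proof.
move=> hA hB; split; first by split; apply: submod0.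
  by move=> x y [Ax Bx] [Ay By]; split; apply: submodB.
by move=> r x [Ax Bx]; split; apply: submodZ.
Qed.

Fixpoint spanned (l : seq X) (x : X) : Prop :=
  if l is a :: l' then exists r y, spanned l' y /\ x = r *: a + y else x = 0.

Lemma submod_spanned l : submod (spanned l).
Proof.
elim: l => [|a l IHl] /=.
  by split=> [//|x y -> ->|r x ->]; rewrite ?subr0 ?scaler0.
split; first by exists 0, 0; rewrite scale0r addr0; split; first exact: submod0.
  move=> _ _ [r [x [lx ->]]] [s [y [ly ->]]]; exists (r - s), (x - y).
  by rewrite scalerBl opprD addrACA; split; first exact: submodB.
move=> r _ [s [y [ly ->]]]; exists (r * s), (r *: y).
by rewrite scalerDr scalerA; split; first exact: submodZ.
Qed.

Lemma spanned_cons a l x : spanned l x -> spanned (a :: l) x.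
Proof. by move=> lx; exists 0, x; rewrite scale0r add0r. Qed.

Lemma spanned_mem l x : x \in l -> spanned l x.
Proof.
elim: l => [//|a l IHl]; rewrite inE => /predU1P [->|/IHl]; last exact: spanned_cons.
by exists 1, 0; rewrite scale1r addr0; split; first exact: submod0 (submod_spanned l).
Qed.

Lemma spanned_min Q l : submod Q -> (forall x, x \in l -> Q x) ->
  forall x, spanned l x -> Q x.
Proof.
move=> hQ; elim: l => [|a l IHl] lQ x /=; first by move->; apply: submod0.
move=> [r [y [ly ->]]]; apply: submodD (submodZ _ hQ (lQ a (mem_head a l))) _ => //.
by apply: IHl ly => z lz; apply: lQ; rewrite inE lz orbT.
Qed.

Lemma spanned_sum l x : spanned l x ->
  exists c : 'I_(size l) -> R^c, x = \sum_(i < size l) c i *: l`_i.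
Proof.
elim: l x => [|a l IHl] x /=; first by move->; exists (fun=> 0); rewrite big_ord0.
move=> [r [y [/IHl [c ->] ->]]].
exists (fun i => if unlift ord0 i is Some j then c j else r).
rewrite big_ord_recl /= unlift_none; congr (_ + _).
by apply: eq_bigr => i _; rewrite liftK.
Qed.

Lemma fin_gen_spanned l : (forall x, spanned l x) -> fin_gen X.
Proof. by move=> lX; exists l => x; apply: spanned_sum. Qed.

Definition dcc (P : X -> Prop) := forall C : nat -> X -> Prop,
  (forall k, submod (C k)) -> (forall k x, C k.+1 x -> C k x) ->
  (forall k x, C k x -> P x) ->
  exists k0, forall k, (k0 <= k)%N -> forall x, C k x <-> C k0 x.

Lemma chain_le (C : nat -> X -> Prop) : (forall k x, C k.+1 x -> C k x) ->
  forall k1 k2, (k1 <= k2)%N -> forall x, C k2 x -> C k1 x.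
Proof.
move=> decC k1 k2 /subnK <-; elim: (k2 - k1)%N => [//|d IHd] x.
by rewrite addSn => /decC /IHd.
Qed.

Lemma right_ideal_coef (C : X -> Prop) a l : submod C ->
  right_ideal (fun s : R => exists2 q, C q & spanned l (q - (s : R^c) *: a)).
Proof.
move=> hC; have hl := submod_spanned l; split.
- by exists 0; rewrite ?scale0r ?subr0; apply: submod0.
- move=> s t [q Cq lq] [q' Cq' lq']; exists (q - q'); first exact: submodB.
  have swap (u v w z : X) : u - v - (w - z) = u - w - (v - z).
    by rewrite !opprB !addrA [u - v + z]addrAC [u - w + z]addrAC addrAC.
  by rewrite (@scalerBl _ _ (s : R^c) t) swap; apply: submodB.
- move=> s t [q Cq lq]; exists ((t : R^c) *: q); first exact: submodZ.
  by have := submodZ (t : R^c) hl lq; rewrite scalerBr scalerA.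
Qed.

Lemma dcc_cons (hart : right_artinian R) a l :
  dcc (spanned l) -> dcc (spanned (a :: l)).
Proof.
move=> dcc_l C subC decC inC.
pose D k x := C k x /\ spanned l x.
have [k1 stD] : exists k1, forall k, (k1 <= k)%N -> forall x, D k x <-> D k1 x.
  apply: dcc_l => [k|k x [Cx lx]|k x []//].
    exact: submodI (subC k) (submod_spanned l).
  by split=> //; apply: decC.
pose I k (s : R) := exists2 q, C k q & spanned l (q - (s : R^c) *: a).
have [k2 stI] : exists k2, forall k, (k2 <= k)%N -> forall s, I k s <-> I k2 s.
  apply: hart => [k|k s [q Cq lq]]; first exact: right_ideal_coef.
  by exists q => //; apply: decC.
exists (maxn k1 k2) => k le_k x; split; first exact: chain_le.
move=> Cx; have [r [y [ly Exy]]] := inC _ _ Cx.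
have [q Cq lq] : I k r.
  apply: (stationary_le stI (leq_maxr k1 k2) (leq_trans (leq_maxr k1 k2) le_k)).
  by exists x; rewrite // Exy addrAC subrr add0r.
have Dxq : D (maxn k1 k2) (x - q).
  split; first exact: submodB Cx (chain_le decC le_k Cq).
  have -> : x - q = y - (q - r *: a) by rewrite Exy opprB addrA [r *: a + y]addrC.
  exact: submodB (submod_spanned l) _ _.
have [Cxq _] := stationary_le stD (leq_maxl k1 k2) (leq_trans (leq_maxl k1 k2) le_k) Dxq.
by rewrite -(subrK q x); apply: submodD.
Qed.

Lemma dcc_spanned (hart : right_artinian R) l : dcc (spanned l).
Proof.
elim: l => [|a l]; last exact: dcc_cons.
move=> C subC _ inC; exists 0%N => k _ x.
by split=> /inC ->; apply: submod0.
Qed.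

Lemma dcc_minimal (P : X -> Prop) (Bad : (X -> Prop) -> Prop) : dcc P ->
  (forall Q, Bad Q -> submod Q /\ forall x, Q x -> P x) ->
  forall Q0, Bad Q0 -> exists2 Q, Bad Q &
    forall Q', Bad Q' -> (forall x, Q' x -> Q x) -> forall x, Q x -> Q' x.
Proof.
move=> dccP badP Q0 badQ0; apply: NNPP => noMin.
have next Q : Bad Q -> exists Q', [/\ Bad Q', forall x, Q' x -> Q x
                                   & ~ forall x, Q x -> Q' x].
  move=> badQ; apply: NNPP => noNext; apply: noMin; exists Q => // Q' badQ' Q'Q.
  by apply: NNPP => notQQ'; apply: noNext; exists Q'.
pose T := {Q : X -> Prop | Bad Q}.
pose step (q : T) : T := let s := cid (next _ (proj2_sig q)) in
  exist _ (proj1_sig s) (let: And3 h _ _ := proj2_sig s in h).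
pose C k := proj1_sig (iter k step (exist _ Q0 badQ0)).
have stepC k : (forall x, C k.+1 x -> C k x) /\ ~ forall x, C k x -> C k.+1 x.
  rewrite /C /=; set q := iter k step _.
  by case: (proj2_sig (cid (next _ (proj2_sig q)))).
have [k0 stC] := dccP C (fun k => proj1 (badP _ (proj2_sig _)))
  (fun k => proj1 (stepC k)) (fun k => proj2 (badP _ (proj2_sig _))).
by apply: (proj2 (stepC k0)) => x /(stC k0.+1 (leqnSn _)).
Qed.

End Submodules.

Section LinearOn.
Variables (R : nzRingType) (X Y : lmodType R^c).

Definition linear_on (Q : X -> Prop) (f : X -> Y) :=
  forall r x y, Q x -> Q y -> f (r *: x + y) = r *: f x + f y.

Lemma linear_on0 Q f : submod Q -> linear_on Q f -> f 0 = 0.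
Proof.
move=> hQ fQ; have Q0 := submod0 hQ.
by have := fQ (-1) 0 0 Q0 Q0; rewrite scaler0 addr0 scaleN1r addNr.
Qed.

Lemma spanned_map Q f l : submod Q -> linear_on Q f ->
  (forall x, spanned l x -> Q x) -> forall x, spanned l x -> spanned (map f l) (f x).
Proof.
move=> hQ fQ; elim: l => [|a l IHl] lQ x /=; first by move->; apply: linear_on0 fQ.
move=> [r [y [ly ->]]]; have lQ' z : spanned l z -> Q z by move/(spanned_cons a)/lQ.
have Qa : Q a by apply/lQ/spanned_mem/mem_head.
rewrite fQ //; last exact: lQ'.
by exists r, (f y); split=> //; apply: IHl.
Qed.

End LinearOn.

Section LinearOf.
Variables (R : nzRingType) (U V : lmodType R^c) (f : U -> V) (linf : linear f).
Definition linear_of := let _ := linf in f.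
HB.instance Definition _ := GRing.isLinear.Build R^c U V *:%R linear_of linf.
End LinearOf.

Section Lifting.
Variables (R : nzRingType) (X B : lmodType R^c) (p : {linear B -> X}).

Definition liftable (Q : X -> Prop) :=
  exists2 g : X -> B, linear_on Q g & forall x, Q x -> p (g x) = x.

Lemma liftable_zero Q : (forall x, Q x -> x = 0) -> liftable Q.
Proof.
move=> Q0; exists (fun=> 0) => [r x y _ _|x /Q0 ->]; last exact: raddf0.
by rewrite scaler0 addr0.
Qed.

Section Summands.
Variables (Q A C : X -> Prop) (hQ : submod Q) (hA : submod A) (hC : submod C).
Hypotheses (AQ : forall x, A x -> Q x) (AC0 : forall x, A x -> C x -> x = 0)
  (QAC : forall x, Q x -> exists a c, [/\ A a, C c & x = a + c]).

Lemma summand_uniq x a a' : A a -> A a' -> C (x - a) -> C (x - a') -> a = a'.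
Proof.
move=> Aa Aa' Cxa Cxa'; apply/eqP; rewrite -subr_eq0; apply/eqP.
apply: AC0; first exact: submodB.
have -> : a - a' = (x - a') - (x - a) by rewrite opprB [RHS]addrC addrA subrK.
exact: submodB.
Qed.

Lemma summand_proj : exists pa : X -> X,
  [/\ forall x, Q x -> A (pa x) /\ C (x - pa x), linear_on Q pa
    & forall x, A x -> pa x = x].
Proof.
have proj x : exists a, Q x -> A a /\ C (x - a).
  have [Qx|notQx] := classic (Q x); last by exists 0.
  have [a [c [Aa Cc ->]]] := QAC Qx; exists a => _.
  by rewrite addrAC subrr add0r.
pose pa x := proj1_sig (cid (proj x)).
have paP x : Q x -> A (pa x) /\ C (x - pa x) := proj2_sig (cid (proj x)).
exists pa; split=> // [r x y Qx Qy|x Ax].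
  have Qrxy : Q (r *: x + y) by apply: submodD (submodZ _ hQ Qx) Qy.
  have [[Ax Cx] [Ay Cy]] := (paP x Qx, paP y Qy); have [Arxy Crxy] := paP _ Qrxy.
  apply: summand_uniq Arxy _ Crxy _; first by apply: submodD (submodZ _ hA Ax) Ay.
  rewrite opprD addrACA -scalerBr.
  exact: submodD (submodZ _ hC Cx) Cy.
have [Apx Cxpx] := paP x (AQ Ax).
by apply: summand_uniq Apx Ax Cxpx _; rewrite subrr; apply: submod0.
Qed.

Lemma liftable_dsum : liftable A -> liftable C -> liftable Q.
Proof.
move=> [gA linA gAK] [gC linC gCK]; have [pa [paP linpa _]] := summand_proj.
exists (fun x => gA (pa x) + gC (x - pa x)) => [r x y Qx Qy|x Qx].
  have [[Ax Cx] [Ay Cy]] := (paP x Qx, paP y Qy).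
  have E : r *: x + y - (r *: pa x + pa y) = r *: (x - pa x) + (y - pa y).
    by rewrite opprD addrACA -scalerBr.
  by rewrite linpa // E linA // linC // scalerDr addrACA.
by have [Ax Cx] := paP x Qx; rewrite linearD /= gAK // gCK // addrC subrK.
Qed.

Lemma spanned_summand l : (forall x, Q x <-> spanned l x) ->
  exists l', forall x, A x <-> spanned l' x.
Proof.
move=> Ql; have [pa [paP linpa paA]] := summand_proj.
exists (map pa l) => x; split=> [Ax|].
  rewrite -(paA _ Ax); apply: (spanned_map hQ linpa) => [z /Ql //|].
  exact/Ql/AQ.
apply: spanned_min hA _ x => _ /mapP [w lw ->].
by have [] := paP w (proj2 (Ql w) (spanned_mem lw)).
Qed.

End Summands.
End Lifting.

Section SubModule.
Variables (R : nzRingType) (X : lmodType R^c) (Q : X -> Prop) (hQ : submod Q).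

(* Mentioning [hQ] makes it a parameter of [sub_mod], which the closure instance needs. *)
Definition submod_pred : {pred X} := fun x => let _ := hQ in `[< Q x >].

Lemma submod_pred_closed : submod_closed submod_pred.
Proof.
split; first by apply/asboolP; apply: submod0.
move=> r x y /asboolP Qx /asboolP Qy; apply/asboolP.
exact: submodD (submodZ _ hQ Qx) Qy.
Qed.

HB.instance Definition _ := GRing.isSubmodClosed.Build _ _ submod_pred
  (GRing.submod_closed_semi submod_pred_closed).
Inductive sub_mod := SubMod x & x \in submod_pred.
Definition sub_mod_val u := let: SubMod x _ := u in x.
HB.instance Definition _ := [isSub for sub_mod_val].
HB.instance Definition _ := [Choice of sub_mod by <:].
HB.instance Definition _ := [SubChoice_isSubZmodule of sub_mod by <:].
HB.instance Definition _ := [SubZmodule_isSubLmodule of sub_mod by <:].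

Definition sub_of (x : X) : sub_mod := insubd 0 x.

Lemma val_sub_of x : Q x -> val (sub_of x) = x.
Proof. by move=> Qx; apply: insubdK; apply/asboolP. Qed.

Lemma sub_modP (y : sub_mod) : Q (val y).
Proof. exact/asboolP/(valP y). Qed.

Lemma sub_ofK (y : sub_mod) : sub_of (val y) = y.
Proof. by apply: val_inj; rewrite val_sub_of //; apply: sub_modP. Qed.

Lemma linear_on_sub_of : linear_on Q sub_of.
Proof.
move=> r x y Qx Qy; apply: val_inj.
rewrite val_sub_of; last exact: submodD (submodZ _ hQ Qx) Qy.
by rewrite linearP /= !val_sub_of.
Qed.

Lemma fin_gen_sub_mod l : (forall x, Q x <-> spanned l x) -> fin_gen sub_mod.
Proof.
move=> Ql; apply: (@fin_gen_spanned _ _ (map sub_of l)) => y.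
rewrite -(sub_ofK y); apply: (spanned_map hQ linear_on_sub_of) => [x /Ql //|].
exact/Ql/sub_modP.
Qed.

Lemma sub_mod_split : ~ indecomposable sub_mod -> (exists y : sub_mod, y <> 0) ->
  exists A C : X -> Prop,
    [/\ submod A, submod C, (forall x, A x -> C x -> x = 0),
        (forall x, Q x -> exists a c, [/\ A a, C c & x = a + c])
      & [/\ forall x, A x -> Q x, forall x, C x -> Q x,
            exists2 a, A a & a <> 0 & exists2 c, C c & c <> 0]].
Proof.
move=> notInd [y0 y0nz].
have [A0 [C0 [hA0 hC0 AC00 dec0 nz0]]] : exists A0 C0 : sub_mod -> Prop,
  [/\ submod A0, submod C0, (forall y, A0 y -> C0 y -> y = 0),
      (forall y, exists a c, [/\ A0 a, C0 c & y = a + c])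
    & ~ ((forall y, A0 y -> y = 0) \/ (forall y, C0 y -> y = 0))].
  apply: NNPP => noSplit; apply: notInd; split; first by exists y0.
  move=> A0 C0 hA0 hC0 AC00 dec0; apply: NNPP => nz0; apply: noSplit.
  by exists A0, C0.
have [nzA0 nzC0] := not_or_and _ _ nz0.
pose im (D0 : sub_mod -> Prop) x := exists2 y, val y = x & D0 y.
have im_submod D0 : submod D0 -> submod (im D0).
  move=> hD0; split; first by exists 0; [apply: raddf0|apply: submod0].
    by move=> _ _ [y <- D0y] [z <- D0z]; exists (y - z); [apply: raddfB|apply: submodB].
  by move=> r _ [y <- D0y]; exists (r *: y); [apply: linearZ_LR|apply: submodZ].
have im_Q D0 x : im D0 x -> Q x by case=> y <- _; apply: sub_modP.
have im_nz D0 : ~ (forall y, D0 y -> y = 0) -> exists2 x, im D0 x & x <> 0.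
  move=> nzD0; apply: NNPP => noNz; apply: nzD0 => y D0y; apply: val_inj.
  by rewrite raddf0; apply: NNPP => vy_nz; apply: noNz; exists (val y) => //; exists y.
exists (im A0), (im C0); split; [exact: im_submod|exact: im_submod| | |].
- move=> _ [a <- A0a] [c /val_inj ca C0c].
  by rewrite (AC00 a) ?raddf0 // -ca.
- move=> x Qx; have [a [c [A0a C0c E]]] := dec0 (sub_of x).
  exists (val a), (val c); split; [by exists a|by exists c|].
  by rewrite -{1}(val_sub_of Qx) E raddfD.
- by split; [exact: im_Q|exact: im_Q|exact: im_nz|exact: im_nz].
Qed.

End SubModule.

Lemma liftable_sub_mod (R : nzRingType) (X B : lmodType R^c) (p : {linear B -> X})
    (Q : X -> Prop) (hQ : submod Q) (s : {linear sub_mod hQ -> B}) :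
  (forall y, p (s y) = val y) -> liftable p Q.
Proof.
move=> sK; exists (s \o sub_of hQ) => [r x y Qx Qy|x Qx] /=.
  by rewrite linear_on_sub_of // linearP.
by rewrite sK val_sub_of.
Qed.

Section LiftSpanned.
Variables (R : nzRingType) (X B : lmodType R^c) (p : {linear B -> X}).
Hypothesis hart : right_artinian R.
Hypothesis lift_indecomposable : forall (Q : X -> Prop) (hQ : submod Q),
  (exists l, forall x, Q x <-> spanned l x) -> indecomposable (sub_mod hQ) ->
  liftable p Q.

Lemma liftable_spanned l : liftable p (spanned l).
Proof.
apply: NNPP => not_lift_l.
pose Bad Q := [/\ submod Q, (forall x, Q x -> spanned l x),
  (exists l', forall x, Q x <-> spanned l' x) & ~ liftable p Q].
have Bad_sub Q : Bad Q -> submod Q /\ forall x, Q x -> spanned l x by case.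
have Bad_l : Bad (spanned l) by split=> //; [exact: submod_spanned|exists l].
have [Q [hQ Ql [l' Ql'] notQ] minQ] :=
  dcc_minimal (dcc_spanned (l := l) hart) Bad_sub Bad_l.
have [nzQ|zQ] := classic (exists y : sub_mod hQ, y <> 0); last first.
  apply/notQ/liftable_zero => x Qx; rewrite -(val_sub_of hQ Qx).
  have -> : sub_of hQ x = 0 by apply: NNPP => nz; apply: zQ; exists (sub_of hQ x).
  exact: raddf0.
have [indQ|notInd] := classic (indecomposable (sub_mod hQ)).
  by case: notQ; apply: (lift_indecomposable _ indQ); exists l'.
have [A [C [hA hC AC0 QAC [AQ CQ nzA nzC]]]] := sub_mod_split notInd nzQ.
have lift_summand (D E : X -> Prop) : submod D -> submod E ->
    (forall x, D x -> Q x) -> (forall x, E x -> Q x) -> (forall x, D x -> E x -> x = 0) ->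
    (forall x, Q x -> exists d e, [/\ D d, E e & x = d + e]) ->
    (exists2 e, E e & e <> 0) -> liftable p D.
  move=> hD hE DQ EQ DE0 QDE [e Ee enz]; apply: NNPP => notD.
  have badD : Bad D.
    split=> // [x /DQ /Ql //|]; exact: spanned_summand hQ hD hE DQ DE0 QDE l' Ql'.
  by apply/enz/DE0 => //; apply: minQ badD DQ _ (EQ _ Ee).
apply/notQ/(liftable_dsum hQ hA hC AQ AC0 QAC).
  exact: lift_summand hA hC AQ CQ AC0 QAC nzC.
apply: lift_summand hC hA CQ AQ _ _ nzA => [x Cx Ax|x /QAC [a [c [Aa Cc ->]]]].
  exact: AC0.
by exists c, a; rewrite addrC.
Qed.

End LiftSpanned.

Lemma pure_epi_of_liftable (R : nzRingType) (B X : lmodType R^c) (p : {linear B -> X}) :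
  (forall l, liftable p (spanned l)) -> pure_epi p.
Proof.
move=> lift; split=> [x|N [k [phi [phi_onto _]]] f].
  have [g _ gK] := lift [:: x].
  by exists (g x); apply/gK/spanned_mem/mem_head.
pose l := [seq f (phi (delta_mx 0 j)) | j <- enum 'I_k].
have [g ling gK] := lift l.
have l_f y : spanned l (f y).
  have [v <-] := phi_onto y; rewrite (row_sum_delta v) !linear_sum.
  apply: (big_ind (spanned l)) => [|u w|j _]; first exact: submod0 (submod_spanned l).
    exact: submodD (submod_spanned l).
  by rewrite !linearZ; apply/(submodZ _ (submod_spanned l))/spanned_mem/map_f/mem_enum.
have lin_gf : linear (g \o f) by move=> r y z /=; rewrite linearP ling.
by exists (linear_of lin_gf) => y; apply: gK.
Qed.

Lemma dsum_extend (R : nzRingType) (I : eqType) (F : I -> lmodType R^c)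
    (D Y : lmodType R^c) (iota : forall i, {linear F i -> D}) : is_dsum iota ->
  forall i (g : {linear F i -> Y}),
  exists h : {linear D -> Y}, forall x, h (iota i x) = g x.
Proof.
move=> hD i g.
pose G j : {linear F j -> Y} :=
  if j =P i is ReflectT e then eq_rect_r (fun j => {linear F j -> Y}) g e else \0.
have [h [hG _]] := hD Y G; exists h => x; rewrite hG /G.
by case: eqP => // e; rewrite (eq_irrelevance e erefl).
Qed.

Unset Implicit Arguments. Set Strict Implicit.

Theorem lemma10 (R : ringType) (S : lmodType R^c -> Prop)
  (hart : right_artinian R) (hsum : closed_dsum S) (hsub : closed_sub S)
  (hR : S (R^c)^o)
  (n : nat) (Ms : 'I_n -> lmodType R^c)
  (hMs : forall i, [/\ S (Ms i), fin_gen (Ms i) & indecomposable (Ms i)])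
  (hdist : forall i j, mod_iso (Ms i) (Ms j) -> i = j)
  (hall : forall N : lmodType R^c, S N -> fin_gen N -> indecomposable N ->
            exists i, mod_iso N (Ms i))
  (M : lmodType R^c) (inj : forall i, {linear Ms i -> M}) (hM : is_dsum inj)
  (X : lmodType R^c) (hX : S X)
  (B : lmodType R^c) (e : forall h : {linear M -> X}, {linear M -> B})
  (hB : is_dsum (F := fun _ : {linear M -> X} => M) e)
  (p : {linear B -> X}) (hp : forall h m, p (e h m) = h m) :
  pure_epi p.
Proof.
apply: pure_epi_of_liftable => l.
apply: (liftable_spanned hart _ l) => Q hQ [l' Ql'] indQ.
have SQ : S (sub_mod hQ).
  by apply: (hsub _ _ (val : {linear sub_mod hQ -> X})) => //; apply: val_inj.
have [i [phi [psi phiK psiK]]] := hall _ SQ (fin_gen_sub_mod hQ Ql') indQ.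
pose psi_Q : {linear Ms i -> X} := val \o linear_of (can2_linear phiK psiK).
have [h hK] := dsum_extend hM psi_Q.
apply: (liftable_sub_mod (s := e h \o inj i \o phi)) => y /=.
by rewrite hp hK /= /linear_of phiK.
Qed.
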